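(* Let $K$ be a field of characteristic $p>0$. Identify each $\sigma\in\mathrm{Aut}_K(P_n)$ with the $K$-automorphism $a\mapsto\sigma a\sigma^{-1}$ of $\mathcal{D}(P_n)$. Then $\mathrm{Aut}_K(P_n)=\{\tau\in\mathrm{Aut}_K(\mathcal{D}(P_n))\mid\tau(P_n)=P_n\}$, and for each $\sigma\in\mathrm{Aut}_K(P_n)$ the automorphism $a\mapsto\sigma a\sigma^{-1}$ is the only $K$-algebra automorphism of $\mathcal{D}(P_n)$ extending $\sigma$.
   Context: $P_n=K[x_1,\ldots,x_n]$; $\mathcal{D}(P_n)\subseteq\mathrm{End}_K(P_n)$ is the ring of differential operators on $P_n$, generated by $P_n$ (multiplication operators) and the operators $\partial_i^{[k]}=\partial_i^k/k!$ given by $\partial_i^{[k]}(x^m)=\binom{m_i}{k}x^{m-ke_i}$. *)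

From HB Require Import structures.
From mathcomp Require Import all_boot all_order all_algebra.
From mathcomp Require Import mpoly.
Set Implicit Arguments. Unset Strict Implicit. Unset Printing Implicit Defensive.
Import GRing.Theory.
Local Open Scope ring_scope.

Section DiffOps.
Variables (K : fieldType) (n : nat).
Local Notation P := {mpoly K[n]}.

Definition mulop (f : P) : P -> P := fun g => f * g.

(* divided-power derivation  d_i^[k] : x^m |-> binom(m_i, k) x^(m - k e_i),
   extended K-linearly *)
Definition dpow (i : 'I_n) (k : nat) : P -> P := fun p =>
  \sum_(m <- msupp p)
     (p@_m * ('C(m i, k))%:R) *: 'X_[(m - (U_(i) *+ k))%MM].

(* D(P_n): the K-subalgebra of End_K(P_n) generated by the multiplication
   operators and the d_i^[k] (closed also under pointwise equality). *)
Inductive inD : (P -> P) -> Prop :=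
| inD_mul f : inD (mulop f)
| inD_dpow i k : inD (dpow i k)
| inD_add a b : inD a -> inD b -> inD (fun g => a g + b g)
| inD_scale (c : K) a : inD a -> inD (fun g => c *: a g)
| inD_comp a b : inD a -> inD b -> inD (a \o b)
| inD_ext a b : inD a -> (forall g, a g = b g) -> inD b.

Definition Palg_auto (sigma sigma' : P -> P) : Prop :=
  cancel sigma sigma' /\ cancel sigma' sigma /\
  (forall f g, sigma (f + g) = sigma f + sigma g) /\
  (forall (c : K) f, sigma (c *: f) = c *: sigma f) /\
  (forall f g, sigma (f * g) = sigma f * sigma g) /\
  sigma 1 = 1.

(* K-algebra automorphism of D(P_n); tau is a map on End_K(P_n) whose
   restriction to D(P_n) is what matters *)
Definition Dalg_auto (tau : (P -> P) -> (P -> P)) : Prop :=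
  (forall a, inD a -> inD (tau a)) /\
  (forall a b, inD a -> inD b -> tau a = tau b -> a = b) /\
  (forall b, inD b -> exists2 a, inD a & tau a = b) /\
  (forall a b, inD a -> inD b ->
     tau (fun g => a g + b g) = (fun g => tau a g + tau b g)) /\
  (forall (c : K) a, inD a -> tau (fun g => c *: a g) = (fun g => c *: tau a g)) /\
  (forall a b, inD a -> inD b -> tau (a \o b) = tau a \o tau b) /\
  tau id = id.

Definition conj_op (sigma sigma' : P -> P) (a : P -> P) : P -> P :=
  sigma \o a \o sigma'.

(* tau(P_n) = P_n, with P_n viewed inside D(P_n) via multiplication operators *)
Definition preserves_P (tau : (P -> P) -> (P -> P)) : Prop :=
  (forall f, exists g, tau (mulop f) = mulop g) /\
  (forall g, exists f, tau (mulop f) = mulop g).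

End DiffOps.

(* Call a linear operator on [P_n] of order at most [N] (Grothendieck) when its
   commutators with [N + 1] multiplication operators vanish.  Each [d_i^[k]] has
   order [k]; conversely an operator of order [N] coincides with a
   [P_n]-combination of the monomials [d^[b]], [|b| <= N], since both agree on
   the monomials of degree at most [N].  So every operator of finite order lies
   in [D(P_n)], and finite order is plainly preserved by conjugation with an
   automorphism of [P_n]: conjugation therefore acts on [D(P_n)].
   An automorphism [tau] of [D(P_n)] preserving [P_n] restricts to an
   automorphism [s] of [P_n], and it suffices to see that [tau] agrees with
   conjugation by [s] on every [d_i^[k]], by induction on [k].  The difference
   of [s^-1 tau(d_i^[k+1]) s] and [d_i^[k+1]] commutes with all [x_j], hence is
   multiplication by some [c].  In characteristic [p] the operator [d_i^[k+1]]
   is nilpotent, as [p] divides [C(p^(k+1) (k+1), k+1)], hence so is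
   [d_i^[k+1] + c]; as [d_i^[k+1]] lowers degrees, this forces [c = 0]. *)

From HB Require Import structures.
From mathcomp Require Import all_boot all_order all_algebra.
From mathcomp Require Import bigenough mpoly zify ring.
From mathcomp.multinomials Require Import ssrcomplements.
From Stdlib Require Import FunctionalExtensionality IndefiniteDescription.
Import BigEnough.
Set Implicit Arguments. Unset Strict Implicit. Unset Printing Implicit Defensive.
Import GRing.Theory.

Lemma mul_bin_sub m a b :
  'C(m, b) * 'C(m - b, a) = 'C(a + b, a) * 'C(m, a + b).
Proof.
have [lt|ge] := ltnP m (a + b).
  rewrite [X in _ = _ * X]bin_small // muln0.
  have [lt2|ge2] := ltnP m b; first by rewrite bin_small.
  by rewrite (bin_small (n := m - b)) ?muln0 // ltn_subLR // addnC.
apply/eqP; rewrite -(eqn_pmul2r (fact_gt0 (m - (a + b)))).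
rewrite -(eqn_pmul2r (fact_gt0 a)) -(eqn_pmul2r (fact_gt0 b)); apply/eqP.
have a_le : a <= m - b by rewrite leq_subRL ?(leq_trans (leq_addl a b) ge) // addnC.
have fact_mb := bin_fact a_le; rewrite -subnDA addnC in fact_mb.
have fact_ab := bin_fact (leq_addr b a); rewrite addKn in fact_ab.
transitivity ('C(m, b) * (b`! * ('C(m - b, a) * (a`! * (m - (a + b))`!)))); first ring.
rewrite fact_mb (bin_fact (leq_trans (leq_addl a b) ge)).
transitivity ('C(m, a + b) * (('C(a + b, a) * (a`! * b`!)) * (m - (a + b))`!)); last ring.
by rewrite fact_ab bin_fact.
Qed.

(* Otherwise [p ^ k] would be coprime to it and divide
   [k * C(p^k k, k) = p^k k * C(p^k k - 1, k - 1)], although [k < p ^ k]. *)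
Lemma prime_dvd_bin_expn p k : prime p -> 0 < k -> p %| 'C(p ^ k * k, k).
Proof.
move=> p_pr k_gt0; apply/negPn/negP => ndvd.
have cop : coprime (p ^ k) 'C(p ^ k * k, k) by rewrite coprime_pexpl // prime_coprime.
have := mul_bin_diag (p ^ k * k) k.-1; rewrite prednK // => e.
have : p ^ k %| k * 'C(p ^ k * k, k) by rewrite -e -mulnA dvdn_mulr.
rewrite Gauss_dvdl // => /(dvdn_leq k_gt0).
by rewrite leqNgt ltn_expl ?prime_gt1.
Qed.

Local Open Scope ring_scope.

Section LinearOperators.
Variables (K : fieldType) (n : nat).
Local Notation P := {mpoly K[n]}.

Section OneOperator.
Variables (F : P -> P) (linF : linear F).

Lemma linear_fun0 : F 0 = 0.
Proof.
have := linF 1 0 0; rewrite !scale1r addr0 => e.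
by apply: (addrI (F 0)); rewrite addr0 -e.
Qed.

Lemma linear_funD x y : F (x + y) = F x + F y.
Proof. by have := linF 1 x y; rewrite !scale1r. Qed.

Lemma linear_funZ c x : F (c *: x) = c *: F x.
Proof. by rewrite -[c *: x]addr0 linF linear_fun0 addr0. Qed.

Lemma linear_funB x y : F (x - y) = F x - F y.
Proof. by rewrite linear_funD -scaleN1r linear_funZ scaleN1r. Qed.

End OneOperator.

Lemma linear_fun_ext (F G : P -> P) : linear F -> linear G ->
  (forall m, F 'X_[m] = G 'X_[m]) -> F =1 G.
Proof.
move=> linF linG eqFG; elim/mpolyind => [|c m p _ _ IH]; first by rewrite !linear_fun0.
by rewrite linF linG eqFG IH.
Qed.

Lemma linear_mulr (f : P) : linear (fun g => f * g).
Proof. by move=> c x y; rewrite mulrDr scalerAr. Qed.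

End LinearOperators.

Section DividedPowers.
Variables (K : fieldType) (n : nat).
Local Notation P := {mpoly K[n]}.
Local Notation dpow := (@dpow K n).
Implicit Types (g : P) (m : 'X_{1..n}) (i : 'I_n).

Lemma dpow_bounded i k g b : (msize g <= b)%N ->
  dpow i k g = \sum_(m : 'X_{1..n < b})
                 (g@_m * ('C(m i, k))%:R) *: 'X_[(m - U_(i) *+ k)%MM].
Proof.
move=> le_gb; rewrite /dpow (big_mksub 'X_{1..n < b}) /=; first last.
- by move=> x /msize_mdeg_lt/leq_trans/(_ le_gb).
- exact: msupp_uniq.
rewrite big_rmcond //= => m /memN_msupp_eq0 ->.
by rewrite mul0r scale0r.
Qed.

Lemma dpow_is_linear i k : linear (dpow i k).
Proof.
move=> c g h; pose_big_enough b; first rewrite !(dpow_bounded i k _ (b := b)) //.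
  rewrite scaler_sumr -big_split /=; apply/eq_bigr=> m _.
  by rewrite !scalerA -scalerDl mcoeffD mcoeffZ mulrDl mulrA.
by close.
Qed.

HB.instance Definition _ i k :=
  GRing.isLinear.Build K P P *:%R (dpow i k) (dpow_is_linear i k).

Lemma dpowX i k m : dpow i k 'X_[m] = ('C(m i, k))%:R *: 'X_[(m - U_(i) *+ k)%MM].
Proof. by rewrite /dpow msuppX big_seq1 mcoeffX eqxx mul1r. Qed.

Lemma mcoeff_dpow i k m g :
  (dpow i k g)@_m = g@_(m + U_(i) *+ k)%MM * ('C(m i + k, k))%:R.
Proof.
pose_big_enough b; first rewrite {2}[g](mpolywE (k := b)) //.
  rewrite !(dpow_bounded i k _ (b := b)) // !raddf_sum /= big_distrl /=.
  apply/eq_bigr => /= [[m' /= _]] _; rewrite !mcoeffZ !mcoeffX.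
  case: (m' =P m + U_(i) *+ k)%MM => [->|ne].
    by rewrite addmK eqxx mnmDE mulmnE mnm1E eqxx mul1n !mulr1.
  rewrite mulr0 mul0r.
  have [lt|ge] := ltnP (m' i) k; first by rewrite bin_small // mulr0 mul0r.
  case: eqP => [e|_]; last by rewrite mulr0.
  case: ne; rewrite -e; apply/mnmP => l.
  rewrite !(mnmDE, mnmBE, mulmnE, mnm1E).
  by case: (i =P l) => [<-|_]; rewrite ?mul1n ?subnK // mul0n subn0 addn0.
by close.
Qed.

Lemma dpow0 i g : dpow i 0 g = g.
Proof. by apply/mpolyP => m; rewrite mcoeff_dpow mulm0n addm0 addn0 bin0 mulr1. Qed.

Lemma dpow_mulX_neq i j k g : i != j -> dpow i k ('X_j * g) = 'X_j * dpow i k g.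
Proof.
move=> ne_ij; apply: (linear_fun_ext (F := fun g => dpow i k ('X_j * g))
                                     (G := fun g => 'X_j * dpow i k g)).
- by move=> c x y; rewrite mulrDr -scalerAr linearP.
- by move=> c x y; rewrite linearP mulrDr -scalerAr.
move=> m; rewrite -mpolyXD !dpowX -scalerAr -mpolyXD mnmDE mnm1E eq_sym (negbTE ne_ij).
congr (_ *: 'X_[_]); apply/mnmP => l; rewrite !(mnmDE, mnmBE, mulmnE, mnm1E).
by case: (j =P l) => [<-|_]; rewrite ?(negbTE ne_ij) ?mul0n ?subn0.
Qed.

Lemma dpowS_mulX i k g :
  dpow i k.+1 ('X_i * g) = 'X_i * dpow i k.+1 g + dpow i k g.
Proof.
apply: (linear_fun_ext (F := fun g => dpow i k.+1 ('X_i * g))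
                       (G := fun g => 'X_i * dpow i k.+1 g + dpow i k g)).
- by move=> c x y; rewrite mulrDr -scalerAr linearP.
- move=> c x y; rewrite !linearP mulrDr -scalerAr scalerDr.
  by rewrite -!addrA; congr (_ + _); rewrite addrCA.
move=> m; rewrite -mpolyXD !dpowX -scalerAr -mpolyXD mnmDE mnm1E eqxx add1n binS.
have [lt|ge] := ltnP (m i) k.
  by rewrite !bin_small ?scale0r ?addr0 // ltnW.
have shift l : (U_(i) + m - U_(i) *+ l.+1 = m - U_(i) *+ l)%MM.
  apply/mnmP => j; rewrite !(mnmDE, mnmBE, mulmnE, mnm1E).
  by case: (i =P j) => [<-|_] /=; [lia | rewrite !mul0n !subn0].
rewrite natrD scalerDl shift; have [le|gt] := leqP (m i) k.
  have -> : m i = k by apply/eqP; rewrite eqn_leq le ge.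
  by rewrite bin_small // !scale0r !add0r.
congr (_ *: 'X_[_] + _); rewrite -shift; apply/mnmP => j.
rewrite !(mnmDE, mnmBE, mulmnE, mnm1E).
by case: (i =P j) => [<-|_] /=; [lia | rewrite !mul0n !subn0].
Qed.

Lemma dpow_dpow i a b g :
  dpow i a (dpow i b g) = ('C(a + b, a))%:R *: dpow i (a + b) g.
Proof.
apply: (linear_fun_ext (F := fun g => dpow i a (dpow i b g))
                       (G := fun g => ('C(a + b, a))%:R *: dpow i (a + b) g)).
- by move=> c x y; rewrite !linearP.
- by move=> c x y; rewrite linearP scalerDr !scalerA mulrC.
move=> m; rewrite !dpowX linearZ /= dpowX !scalerA -!natrM.
rewrite mnmBE mulmnE mnm1E eqxx mul1n mul_bin_sub.
congr (_ *: 'X_[_]); apply/mnmP => l; rewrite !(mnmDE, mnmBE, mulmnE, mnm1E).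
by case: (i =P l) => [<-|_] /=; [lia | rewrite !mul0n !subn0].
Qed.

Lemma msize_dpow_lt i k g : (0 < k)%N -> g != 0 -> (msize (dpow i k g) < msize g)%N.
Proof.
move=> k_gt0 g_neq0; have sg : (0 < msize g)%N by rewrite lt0n mmeasure_poly_eq0.
rewrite -(prednK sg) ltnS msizeE; apply/bigmax_leqP_seq => m m_supp _.
rewrite mcoeff_msupp mcoeff_dpow in m_supp.
have : (m + U_(i) *+ k)%MM \in msupp g.
  by rewrite mcoeff_msupp; apply: contraNneq m_supp => ->; rewrite mul0r.
move/msize_mdeg_lt; rewrite mdegD mdegMn mdeg1 mul1n => lt_mk.
by rewrite -ltnS (prednK sg); lia.
Qed.

Lemma iter_dpow i k j g :
  iter j (dpow i k) g = (\prod_(l < j) 'C(l.+1 * k, k))%:R *: dpow i (j * k) g.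
Proof.
elim: j => [|j IH]; first by rewrite big_ord0 scale1r mul0n dpow0.
rewrite iterS IH linearZ /= dpow_dpow scalerA big_ord_recr /= natrM mulrC.
by rewrite mulSn addnC.
Qed.

(* In characteristic [p], the [p ^ k]-th power of [d_i^[k]] has the factor
   [C(p^k k, k)], which [p] divides. *)
Lemma iter_dpow_pchar p i k g :
  p \in [pchar K] -> (0 < k)%N -> iter (p ^ k)%N (dpow i k) g = 0.
Proof.
move=> charKp k_gt0; have p_pr := pcharf_prime charKp.
rewrite iter_dpow; have : (0 < p ^ k)%N by rewrite expn_gt0 prime_gt0.
case e: (p ^ k)%N => [//|j] _; rewrite big_ord_recr /= -e.
have /dvdnP [q ->] := prime_dvd_bin_expn p_pr k_gt0.
by rewrite !natrM (pcharf0 charKp) !mulr0 scale0r.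
Qed.

(* [d_i^[k]] strictly lowers the total degree while [c * _] does not lower it. *)
Lemma iter_dpow_addmul_neq0 i k (c : P) j : (0 < k)%N -> c != 0 ->
  iter j (fun g => dpow i k g + c * g) 1 != 0.
Proof.
move=> k_gt0 c_neq0; elim: j => [|j]; first exact: oner_neq0.
rewrite iterS; set F := iter j _ 1 => F_neq0.
have sc : (0 < msize c)%N by rewrite lt0n mmeasure_poly_eq0.
have le_F_cF : (msize F <= msize (c * F))%N.
  by rewrite msizeM // -(prednK sc) addSn leq_addl.
apply/eqP => e; have eN : c * F = - dpow i k F by apply/eqP; rewrite -addr_eq0 addrC e.
by move: le_F_cF; rewrite eN mmeasureN leqNgt msize_dpow_lt.
Qed.

End DividedPowers.

Section FiniteOrderOperators.
Variables (K : fieldType) (n : nat).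
Local Notation P := {mpoly K[n]}.
Local Notation op := (P -> P).
Implicit Types (f g : P) (a b : op).

Definition opcomm a f : op := fun g => a (f * g) - f * a g.

Fixpoint diffop (N : nat) a : Prop :=
  match N with
  | 0 => linear a /\ forall g, a g = a 1 * g
  | N'.+1 => linear a /\ forall f, diffop N' (opcomm a f)
  end.

Lemma linear_opcomm a f : linear a -> linear (opcomm a f).
Proof.
move=> lina c x y; rewrite /opcomm mulrDr -scalerAr lina (linear_funD lina).
by rewrite !mulrDr -scalerAr scalerBr (linear_funZ lina) addrACA opprD.
Qed.

Lemma diffop_ext N a b : a =1 b -> diffop N a -> diffop N b.
Proof. by move=> /functional_extensionality ->. Qed.

Lemma diffop_mulop N c : diffop N (fun g => c * g).
Proof.
elim: N c => [|N IH] c; split; first exact: linear_mulr.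
- by move=> g; rewrite mulr1.
- exact: linear_mulr.
- by move=> f; apply: diffop_ext (IH 0) => g; rewrite /opcomm mul0r mulrCA subrr.
Qed.

Lemma diffop0 N : diffop N (fun _ => 0).
Proof. by apply: diffop_ext (diffop_mulop N 0) => g; rewrite mul0r. Qed.

Lemma diffopD N a b : diffop N a -> diffop N b -> diffop N (fun g => a g + b g).
Proof.
have linD a' b' : linear a' -> linear b' -> linear (fun g => a' g + b' g).
  by move=> la lb c x y; rewrite la lb scalerDr addrACA.
elim: N a b => [|N IH] a b [la ea] [lb eb]; split; try exact: linD.
  by move=> g; rewrite ea eb mulrDl.
move=> f; apply: diffop_ext (IH _ _ (ea f) (eb f)) => g.
by rewrite /opcomm mulrDr opprD addrACA.
Qed.

Lemma diffopZ N c a : diffop N a -> diffop N (fun g => c *: a g).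
Proof.
have linZ a' : linear a' -> linear (fun g => c *: a' g).
  by move=> la d x y; rewrite la scalerDr !scalerA mulrC.
elim: N a => [|N IH] a [la ea]; split; try exact: linZ.
  by move=> g; rewrite ea scalerAl.
by move=> f; apply: diffop_ext (IH _ (ea f)) => g; rewrite /opcomm scalerBr scalerAr.
Qed.

Lemma diffop_sum N (I : Type) (r : seq I) (Q : pred I) (F : I -> op) :
  (forall i, diffop N (F i)) -> diffop N (fun g => \sum_(i <- r | Q i) F i g).
Proof.
move=> dF; elim: r => [|x r IH].
  by apply: diffop_ext (diffop0 N) => g; rewrite big_nil.
have [Qx|nQx] := boolP (Q x).
  by apply: diffop_ext (diffopD (dF x) IH) => g; rewrite big_cons Qx.
by apply: diffop_ext IH => g; rewrite big_cons (negbTE nQx).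
Qed.

Lemma diffop_mulop_comp N c a : diffop N a -> diffop N (fun g => c * a g).
Proof.
elim: N a => [|N IH] a [la ea]; split.
- by move=> d x y; rewrite la mulrDr scalerAr.
- by move=> g; rewrite ea mulrA.
- by move=> d x y; rewrite la mulrDr scalerAr.
- by move=> f; apply: diffop_ext (IH _ (ea f)) => g; rewrite /opcomm mulrBr mulrCA.
Qed.

Lemma diffop_comp_mulop N c a : diffop N a -> diffop N (fun g => a (c * g)).
Proof.
elim: N a => [|N IH] a [la ea]; split.
- by move=> d x y; rewrite mulrDr -scalerAr la.
- by move=> g; rewrite ea (ea (c * 1)) mulr1 mulrA.
- by move=> d x y; rewrite mulrDr -scalerAr la.
- by move=> f; apply: diffop_ext (IH _ (ea f)) => g; rewrite /opcomm mulrCA.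
Qed.

(* By induction on [N + M], from [[a \o b, f] = a \o [b, f] + [a, f] \o b]. *)
Lemma diffop_comp N M a b : diffop N a -> diffop M b -> diffop (N + M) (a \o b).
Proof.
elim: {N M}(N + M)%N {-2}N {-2}M (erefl (N + M)%N) a b => [|s IH] N M sNM a b.
  have [-> ->] : N = 0%N /\ M = 0%N by lia.
  move=> [la ea] [lb eb]; split=> [c x y|g] /=; first by rewrite lb la.
  by rewrite ea eb (ea (b 1)) mulrA.
case: N sNM => [|N] sNM da.
  case: (da) => _ ea db; rewrite add0n.
  by apply: diffop_ext (diffop_mulop_comp (a 1) db) => g /=; rewrite (ea (b g)).
case: M sNM => [|M] sNM db.
  case: (db) => _ eb; rewrite addn0.
  by apply: diffop_ext (diffop_comp_mulop (b 1) da) => g /=; rewrite (eb g).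
case: (da) (db) => la ea [lb eb]; split=> [c x y /=|f]; first by rewrite lb la.
have d1 := IH N.+1 M ltac:(lia) a (opcomm b f) da (eb f).
have d2 := IH N M.+1 ltac:(lia) (opcomm a f) b (ea f) db.
rewrite addSnnS in d1; apply: diffop_ext (diffopD d1 d2) => g /=.
by rewrite /opcomm (linear_funB la) addrA subrK.
Qed.

Lemma diffopS N a : diffop N a -> diffop N.+1 a.
Proof.
elim: N a => [|N IH] a [la ea]; split=> // f; last exact/IH/ea.
split=> [|g]; first exact: linear_opcomm.
have vanish h : a (f * h) - f * a h = 0.
  by rewrite (ea (f * h)) (ea h) [f * (a 1 * h)]mulrCA subrr.
by rewrite /opcomm !vanish mul0r.
Qed.

Lemma diffop_leq N M a : (N <= M)%N -> diffop N a -> diffop M a.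
Proof.
move=> /subnK <-; elim: (M - N)%N => //= k IH da; exact: diffopS (IH da).
Qed.

Lemma mpoly_alg_ind (S : P -> Prop) : S 1 -> (forall j, S 'X_j) ->
  (forall f g, S f -> S g -> S (f * g)) ->
  (forall c f g, S f -> S g -> S (c *: f + g)) -> S 0 ->
  forall f, S f.
Proof.
move=> S1 SX SM SD S0; elim/mpolyind => [//|c m p _ _ IH]; apply: SD => //.
rewrite mpolyXE_id; apply: big_ind => // i _.
by elim: (m i) => [|k IHk]; rewrite ?expr0 // exprS; apply: SM.
Qed.

Lemma opcommX_eq0 a : linear a -> (forall j g, opcomm a 'X_j g = 0) ->
  forall f g, a (f * g) = f * a g.
Proof.
move=> la comm0; apply: mpoly_alg_ind.
- by move=> g; rewrite !mul1r.
- by move=> j g; apply/eqP; rewrite -subr_eq0; apply/eqP; apply: comm0.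
- by move=> f1 f2 e1 e2 g; rewrite -mulrA e1 e2 mulrA.
- by move=> c f1 f2 e1 e2 g; rewrite mulrDl -scalerAl la e1 e2 mulrDl scalerAl.
- by move=> g; rewrite mul0r linear_fun0 // mul0r.
Qed.

Lemma diffop_opcommX N a : linear a ->
  (forall j, diffop N (opcomm a 'X_j)) -> forall f, diffop N (opcomm a f).
Proof.
move=> la dX; apply: mpoly_alg_ind => //.
- by apply: diffop_ext (diffop0 N) => g; rewrite /opcomm !mul1r subrr.
- move=> f1 f2 d1 d2.
  apply: diffop_ext (diffopD (diffop_comp_mulop f2 d1) (diffop_mulop_comp f1 d2)) => g.
  by rewrite /opcomm /= mulrBr addrA subrK !mulrA.
- move=> c f1 f2 d1 d2; apply: diffop_ext (diffopD (diffopZ c d1) d2) => g.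
  rewrite /opcomm mulrDl -scalerAl la mulrDl scalerBr -scalerAl.
  by rewrite addrACA opprD.
- by apply: diffop_ext (diffop0 N) => g; rewrite /opcomm mul0r linear_fun0 // mul0r subrr.
Qed.

Lemma diffop_eq0 N a : diffop N a ->
  (forall m, (mdeg m <= N)%N -> a 'X_[m] = 0) -> forall g, a g = 0.
Proof.
elim: N a => [|N IH] a [la ea] a0 g.
  by rewrite ea -mpolyX0 a0 ?mdeg0 // mul0r.
have comm0 j : forall h, opcomm a 'X_j h = 0.
  apply: IH (ea 'X_j) _ => m m_le.
  by rewrite /opcomm -mpolyXD !a0 ?mulr0 ?subrr ?mdegD ?mdeg1 //; lia.
by rewrite -[g]mulr1 (opcommX_eq0 la comm0) -mpolyX0 a0 ?mdeg0 // mulr0.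
Qed.

End FiniteOrderOperators.

Section DifferentialOperatorAlgebra.
Variables (K : fieldType) (n : nat).
Local Notation P := {mpoly K[n]}.
Local Notation op := (P -> P).
Local Notation dpow := (@dpow K n).
Local Notation diffop := (@diffop K n).
Implicit Types (f g : P) (a b : op) (m bt : 'X_{1..n}) (s : seq 'I_n).

Lemma inD_linear a : inD a -> linear a.
Proof.
elim=> [f|i k|a1 b1 _ IH1 _ IH2|c a1 _ IH|a1 b1 _ IH1 _ IH2|a1 b1 _ IH e].
- exact: linear_mulr.
- exact: linearP.
- by move=> c x y; rewrite IH1 IH2 scalerDr addrACA.
- by move=> d x y; rewrite IH scalerDr !scalerA mulrC.
- by move=> c x y /=; rewrite IH2 IH1.
- by move=> c x y; rewrite -!e IH.
Qed.

Lemma inD_id : inD (id : op).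
Proof. by apply: inD_ext (inD_mul 1) _ => g; rewrite /mulop mul1r. Qed.

Lemma inD_iter a N : inD a -> inD (fun g => iter N a g).
Proof.
move=> Da; elim: N => [|N IH]; first exact: inD_id.
exact: inD_comp Da IH.
Qed.

Lemma inD_sum (I : Type) (r : seq I) (Q : pred I) (F : I -> op) :
  (forall i, inD (F i)) -> inD (fun g => \sum_(i <- r | Q i) F i g).
Proof.
move=> DF; elim: r => [|x r IH].
  by apply: inD_ext (inD_mul 0) _ => g; rewrite big_nil /mulop mul0r.
have [Qx|nQx] := boolP (Q x).
  by apply: inD_ext (inD_add (DF x) IH) _ => g; rewrite big_cons Qx.
by apply: inD_ext IH _ => g; rewrite big_cons (negbTE nQx).
Qed.

Lemma diffop_dpow i k : diffop k (dpow i k).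
Proof.
elim: k => [|k IH]; split; try exact: linearP.
  by move=> g; rewrite !dpow0 mul1r.
apply: diffop_opcommX; first exact: linearP.
move=> j; have [<-|ne_ij] := eqVneq i j.
  by apply: diffop_ext IH => g; rewrite /opcomm dpowS_mulX addrC addKr.
by apply: diffop_ext (diffop0 _ _ k) => g; rewrite /opcomm dpow_mulX_neq ?subrr.
Qed.

Definition dpows (s : seq 'I_n) (bt : 'X_{1..n}) : op :=
  foldr (fun i a => dpow i (bt i) \o a) id s.

Definition dpowm (bt : 'X_{1..n}) : op := dpows (index_enum 'I_n) bt.

Lemma inD_dpows s bt : inD (dpows s bt).
Proof. by elim: s => [|i s IH]; [exact: inD_id | exact: inD_comp (inD_dpow K _ _) IH]. Qed.

Lemma diffop_dpows s bt : diffop (\sum_(i <- s) bt i)%N (dpows s bt).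
Proof.
elim: s => [|i s IH] /=; last by rewrite big_cons; apply: diffop_comp (diffop_dpow _ _) IH.
by rewrite big_nil; split=> [c x y|g] //; rewrite mul1r.
Qed.

Lemma dpowsX s bt m : uniq s -> dpows s bt 'X_[m] =
  (\prod_(i <- s) 'C(m i, bt i))%:R *:
    'X_[(m - \big[+%MM/0%MM]_(i <- s) (U_(i) *+ bt i))%MM].
Proof.
elim: s => [|j s IH] /=; first by rewrite !big_nil subm0 scale1r.
case/andP=> j_notin_s uniq_s; rewrite IH // linearZ /= dpowX scalerA !big_cons.
rewrite -natrM mulnC mnmBE mnm_sumE big1_seq ?subn0 ?submDA ?[(_ + U_(j) *+ _)%MM]addmC //.
move=> i /andP [_ i_in_s]; rewrite mulmnE mnm1E.
by case: (i =P j) => [e|]; [move: j_notin_s; rewrite -e i_in_s | rewrite mul0n].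
Qed.

Lemma diffop_dpowm bt : diffop (mdeg bt) (dpowm bt).
Proof. by rewrite mdegE; apply: diffop_dpows. Qed.

Lemma dpowmX bt m : (mdeg m <= mdeg bt)%N -> dpowm bt 'X_[m] = (m == bt)%:R.
Proof.
move=> le_m_bt; rewrite /dpowm dpowsX ?index_enum_uniq // -multinomUE_id.
have [->|ne_m_bt] := eqVneq m bt.
  rewrite big1 => [|i _]; last exact: binn.
  have -> : (bt - bt = 0)%MM by apply/mnmP => i; rewrite mnmBE mnm0E subnn.
  by rewrite mpolyX0 scale1r.
have [/existsP [i lt_mi]|/existsPn ge_m] := boolP [exists i, (m i < bt i)%N].
  by rewrite (big_rem i) ?mem_index_enum //= bin_small // mul0n scale0r.
have le_bt_m : (bt <= m)%MM by apply/mnm_lepP => i; rewrite leqNgt ge_m.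
have : mdeg (m - bt)%MM = 0%N by move: le_m_bt; rewrite -{1}(submK le_bt_m) mdegD; lia.
move/eqP; rewrite mdeg_eq0 => /eqP m_bt0.
by move: ne_m_bt; rewrite -(submK le_bt_m) m_bt0 add0m eqxx.
Qed.

(* An operator of order [N] agrees on monomials of degree below [M <= N + 1]
   with [sum_(|bt| < M) f_bt d^[bt]], the [f_bt] being fixed degree by degree. *)
Lemma diffop_approx N a M : diffop N a -> (M <= N.+1)%N ->
  exists b, [/\ inD b, diffop N b & forall m, (mdeg m < M)%N -> b 'X_[m] = a 'X_[m]].
Proof.
move=> da; elim: M => [|M IH] le_MN.
  by exists (mulop 0); split=> //; [exact: inD_mul | exact: diffop_mulop].
have [b [Db db eq_ba]] := IH (ltnW le_MN).
pose e (bt : 'X_{1..n < M.+1}) := a 'X_[bt] - b 'X_[bt].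
exists (fun g => b g + \sum_(bt : 'X_{1..n < M.+1} | mdeg bt == M) e bt * dpowm bt g).
split.
- apply: inD_add Db (inD_sum _ _ _) => bt.
  exact: inD_comp (inD_mul (e bt)) (inD_dpows _ bt).
- apply: diffopD db (diffop_sum _ _ _) => bt; apply: diffop_mulop_comp.
  by apply: diffop_leq (diffop_dpowm bt); have := bmdeg bt; lia.
move=> m lt_mM.
have dpowm_m (bt : 'X_{1..n < M.+1}) : mdeg bt == M ->
    e bt * dpowm bt 'X_[m] = e bt * (m == bt)%:R.
  by move=> /eqP deg_bt; rewrite dpowmX // deg_bt -ltnS.
rewrite (eq_bigr _ dpowm_m); have [lt_m|ge_m] := ltnP (mdeg m) M.
  rewrite big1 ?addr0 ?eq_ba // => bt /eqP deg_bt.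
  by case: eqP => [e_m|_]; [move: lt_m; rewrite e_m deg_bt ltnn | rewrite mulr0].
have deg_m : mdeg m = M by apply/eqP; rewrite eqn_leq ge_m andbT -ltnS.
rewrite (bigD1 (BMultinom lt_mM)) /= ?deg_m // eqxx mulr1 big1 ?addr0.
  by rewrite /e addrC subrK.
move=> bt /andP [_ ne]; case: eqP => [e_m|_]; last by rewrite mulr0.
by move: ne; rewrite -(inj_eq val_inj) /= -e_m eqxx.
Qed.

Lemma diffop_inD N a : diffop N a -> inD a.
Proof.
move=> da; have [b [Db db eq_ba]] := diffop_approx da (leqnn N.+1).
have vanish := diffop_eq0 (diffopD da (diffopZ (-1) db)).
apply: inD_ext Db _ => g; apply/eqP; rewrite eq_sym -subr_eq0 -scaleN1r.
by apply/eqP/vanish => m le_mN; rewrite eq_ba // scaleN1r subrr.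
Qed.

End DifferentialOperatorAlgebra.

Section PolyAutomorphism.
Variables (K : fieldType) (n : nat) (s s' : {mpoly K[n]} -> {mpoly K[n]}).
Hypothesis s_auto : Palg_auto s s'.
Local Notation P := {mpoly K[n]}.
Implicit Types (f g : P) (a b : P -> P).

Let sK : cancel s s' := s_auto.1.
Let s'K : cancel s' s := s_auto.2.1.
Let sD f g : s (f + g) = s f + s g := s_auto.2.2.1 f g.
Let sZ (c : K) f : s (c *: f) = c *: s f := s_auto.2.2.2.1 c f.
Let sM f g : s (f * g) = s f * s g := s_auto.2.2.2.2.1 f g.

Lemma Palg_auto_sym : Palg_auto s' s.
Proof.
have s_inj := can_inj sK.
do !split=> //.
- by move=> f g; apply: s_inj; rewrite sD !s'K.
- by move=> c f; apply: s_inj; rewrite sZ !s'K.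
- by move=> f g; apply: s_inj; rewrite sM !s'K.
- by apply: s_inj; rewrite s'K s_auto.2.2.2.2.2.
Qed.

Lemma Palg_auto_linear : linear s.
Proof. by move=> c f g; rewrite sD sZ. Qed.

Lemma conj_opK a : conj_op s' s (conj_op s s' a) = a.
Proof. by apply: functional_extensionality => g; rewrite /conj_op /= !sK. Qed.

Lemma conj_op_id : conj_op s s' id = id.
Proof. by apply: functional_extensionality => g; rewrite /conj_op /= s'K. Qed.

Lemma conj_op_mulop f : conj_op s s' (mulop f) = mulop (s f).
Proof. by apply: functional_extensionality => g; rewrite /conj_op /mulop /= sM s'K. Qed.

Lemma conj_op_add a b :
  conj_op s s' (fun g => a g + b g) = (fun g => conj_op s s' a g + conj_op s s' b g).
Proof. by apply: functional_extensionality => g; rewrite /conj_op /= sD. Qed.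

Lemma conj_op_scale (c : K) a :
  conj_op s s' (fun g => c *: a g) = (fun g => c *: conj_op s s' a g).
Proof. by apply: functional_extensionality => g; rewrite /conj_op /= sZ. Qed.

Lemma conj_op_comp a b : conj_op s s' (a \o b) = conj_op s s' a \o conj_op s s' b.
Proof. by apply: functional_extensionality => g; rewrite /conj_op /= sK. Qed.

Lemma iter_conj_op a N g : iter N (conj_op s s' a) g = s (iter N a (s' g)).
Proof. by elim: N => [|N IH] /=; rewrite ?s'K // IH /conj_op /= sK. Qed.

Lemma linear_conj_op a : linear a -> linear (conj_op s s' a).
Proof.
have [_ [_ [s'D [s'Z _]]]] := Palg_auto_sym.
by move=> la c f g; rewrite /conj_op /= s'D s'Z la sD sZ.
Qed.

Lemma diffop_conj N a : diffop N a -> diffop N (conj_op s s' a).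
Proof.
have [_ [_ [_ [_ [s'M s'1]]]]] := Palg_auto_sym.
elim: N a => [|N IH] a [la ea]; split; try exact: linear_conj_op.
  by move=> g; rewrite /conj_op /= ea sM s'1 s'K.
move=> f; apply: diffop_ext (IH _ (ea (s' f))) => g.
by rewrite /opcomm /conj_op /= s'M (linear_funB Palg_auto_linear) sM s'K.
Qed.

(* Conjugates of the generators have finite order, hence lie in [D(P_n)]. *)
Lemma inD_conj a : inD a -> inD (conj_op s s' a).
Proof.
elim=> [f|i k|a1 b1 _ IH1 _ IH2|c a1 _ IH|a1 b1 _ IH1 _ IH2|a1 b1 _ IH e].
- by rewrite conj_op_mulop; apply: inD_mul.
- exact: diffop_inD (diffop_conj (diffop_dpow K i k)).
- by rewrite conj_op_add; apply: inD_add.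
- by rewrite conj_op_scale; apply: inD_scale.
- by rewrite conj_op_comp; apply: inD_comp.
- by apply: inD_ext IH _ => g; rewrite /conj_op /= e.
Qed.

End PolyAutomorphism.

Lemma conj_Dalg_auto (K : fieldType) (n : nat) (s s' : {mpoly K[n]} -> {mpoly K[n]}) :
  Palg_auto s s' -> Dalg_auto (conj_op s s').
Proof.
move=> s_auto; have s'_auto := Palg_auto_sym s_auto.
do !split.
- exact: inD_conj s_auto.
- by move=> a b _ _ /(congr1 (conj_op s' s)); rewrite !(conj_opK s_auto).
- move=> b Db; exists (conj_op s' s b); first exact: (inD_conj s'_auto Db).
  exact: conj_opK s'_auto b.
- by move=> a b _ _; apply: conj_op_add.
- by move=> c a _; apply: conj_op_scale.
- by move=> a b _ _; apply: conj_op_comp.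
- exact: conj_op_id.
Qed.

Lemma conj_preserves_P (K : fieldType) (n : nat) (s s' : {mpoly K[n]} -> {mpoly K[n]}) :
  Palg_auto s s' -> preserves_P (conj_op s s').
Proof.
move=> s_auto; split=> f; first by exists (s f); apply: conj_op_mulop.
by exists (s' f); rewrite (conj_op_mulop s_auto) s_auto.2.1.
Qed.

Section ExtensionUniqueness.
Variables (K : fieldType) (n p : nat) (s s' : {mpoly K[n]} -> {mpoly K[n]}).
Variable tau : ({mpoly K[n]} -> {mpoly K[n]}) -> ({mpoly K[n]} -> {mpoly K[n]}).
Hypotheses (charKp : p \in [pchar K]) (s_auto : Palg_auto s s') (tau_auto : Dalg_auto tau).
Hypothesis tau_mulop : forall f, tau (mulop f) = mulop (s f).
Local Notation P := {mpoly K[n]}.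
Local Notation dpow := (@dpow K n).
Implicit Types (f g : P) (a b : P -> P).

Let tau_inD a : inD a -> inD (tau a) := tau_auto.1 a.
Let tau_add a b : inD a -> inD b ->
  tau (fun g => a g + b g) = (fun g => tau a g + tau b g) := tau_auto.2.2.2.1 a b.
Let tau_scale (c : K) a : inD a -> tau (fun g => c *: a g) = (fun g => c *: tau a g) :=
  tau_auto.2.2.2.2.1 c a.
Let tau_comp a b : inD a -> inD b -> tau (a \o b) = tau a \o tau b :=
  tau_auto.2.2.2.2.2.1 a b.
Let tau_id : tau id = id := tau_auto.2.2.2.2.2.2.
Let sK : cancel s s' := s_auto.1.
Let sM f g : s (f * g) = s f * s g := s_auto.2.2.2.2.1 f g.
Let s'_auto := Palg_auto_sym s_auto.

Lemma tau_iter a N : inD a -> tau (fun g => iter N a g) = (fun g => iter N (tau a) g).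
Proof.
move=> Da; elim: N => [|N IH]; first exact: tau_id.
by rewrite -[RHS]/(tau a \o (fun g => iter N (tau a) g)) -IH -tau_comp //; apply: inD_iter.
Qed.

(* Transport of [a \o f = f \o a + b] through [tau], read back in [P_n] via [s']. *)
Lemma conj_tau_mulop a b f : inD a -> inD b ->
  a \o mulop f = (fun g => (mulop f \o a) g + b g) ->
  forall g, conj_op s' s (tau a) (f * g) =
            f * conj_op s' s (tau a) g + conj_op s' s (tau b) g.
Proof.
move=> Da Db e g; have Dfa : inD (mulop f \o a) := inD_comp (inD_mul f) Da.
have [_ [_ [s'D [_ [s'M _]]]]] := s'_auto.
have := equal_f (congr1 tau e) (s g).
rewrite (tau_comp Da (inD_mul f)) (tau_add Dfa Db) (tau_comp (inD_mul f) Da) tau_mulop.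
by rewrite /conj_op /mulop /= sM => ->; rewrite s'D s'M sK.
Qed.

Lemma conj_tau_dpowS i k : tau (dpow i k) = conj_op s s' (dpow i k) ->
  exists c, forall g, conj_op s' s (tau (dpow i k.+1)) g = dpow i k.+1 g + c * g.
Proof.
move=> tau_dpow_k.
have linT : linear (conj_op s' s (tau (dpow i k.+1))).
  exact/(linear_conj_op s'_auto)/inD_linear/tau_inD/inD_dpow.
pose th g := conj_op s' s (tau (dpow i k.+1)) g - dpow i k.+1 g.
have lin_th : linear th.
  by move=> c f g; rewrite /th linT linearP scalerBr addrACA opprD.
have th_commX j g : opcomm th 'X_j g = 0.
  rewrite /opcomm /th; have [<-|ne_ij] := eqVneq i j.
    have eX : dpow i k.+1 \o mulop 'X_i =
              (fun h => (mulop 'X_i \o dpow i k.+1) h + dpow i k h).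
      by apply: functional_extensionality => h; rewrite /= /mulop dpowS_mulX.
    rewrite (conj_tau_mulop (inD_dpow K i k.+1) (inD_dpow K i k) eX).
    by rewrite tau_dpow_k (conj_opK s_auto) dpowS_mulX; ring.
  have eX : dpow i k.+1 \o mulop 'X_j =
            (fun h => (mulop 'X_j \o dpow i k.+1) h + mulop 0 h).
    by apply: functional_extensionality => h; rewrite /= /mulop dpow_mulX_neq // mul0r addr0.
  rewrite (conj_tau_mulop (inD_dpow K i k.+1) (inD_mul 0) eX) tau_mulop.
  rewrite (conj_op_mulop s'_auto) /mulop dpow_mulX_neq //.
  by rewrite sK mul0r addr0; ring.
exists (th 1) => g; have := opcommX_eq0 lin_th th_commX g 1.
by rewrite mulr1 mulrC => <-; rewrite /th addrC subrK.
Qed.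

Lemma tau_dpow i k : tau (dpow i k) = conj_op s s' (dpow i k).
Proof.
elim: k => [|k IH].
  have -> : dpow i 0 = id by apply: functional_extensionality => g; rewrite dpow0.
  by rewrite tau_id (conj_op_id s_auto).
have [c eT] := conj_tau_dpowS IH.
suff c0 : c = 0.
  rewrite -[LHS](conj_opK s'_auto); congr conj_op.
  by apply: functional_extensionality => g; rewrite eT c0 mul0r addr0.
apply/eqP; apply: contraT => c_neq0.
have := iter_dpow_addmul_neq0 i (p ^ k.+1) (ltn0Sn k) c_neq0.
rewrite -(eq_iter eT) (iter_conj_op s'_auto).
rewrite -(equal_f (tau_iter (p ^ k.+1)%N (inD_dpow K i k.+1))).
have -> : (fun g => iter (p ^ k.+1)%N (dpow i k.+1) g) = mulop 0.
  by apply: functional_extensionality => g; rewrite iter_dpow_pchar // /mulop mul0r.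
rewrite tau_mulop /mulop (linear_fun0 (Palg_auto_linear s_auto)) mul0r.
by rewrite (linear_fun0 (Palg_auto_linear s'_auto)) eqxx.
Qed.

Lemma Dalg_auto_extension_eq_conj a : inD a -> tau a = conj_op s s' a.
Proof.
elim=> [f|i k|a1 b1 D1 IH1 D2 IH2|c a1 D1 IH|a1 b1 D1 IH1 D2 IH2|a1 b1 _ IH e].
- by rewrite tau_mulop (conj_op_mulop s_auto).
- exact: tau_dpow.
- by rewrite tau_add // IH1 IH2 (conj_op_add s_auto a1 b1).
- by rewrite tau_scale // IH (conj_op_scale s_auto c a1).
- by rewrite tau_comp // IH1 IH2 (conj_op_comp s_auto a1 b1).
- by have <- : a1 = b1 by apply: functional_extensionality.
Qed.

End ExtensionUniqueness.

Section Restriction.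
Variables (K : fieldType) (n : nat).
Local Notation P := {mpoly K[n]}.
Implicit Types (f g : P).

Lemma mulop_inj : injective (@mulop K n).
Proof. by move=> f g /(congr1 (fun a => a 1)); rewrite /mulop !mulr1. Qed.

Lemma mulopD f g : mulop (f + g) = (fun h => mulop f h + mulop g h).
Proof. by apply: functional_extensionality => h; rewrite /mulop mulrDl. Qed.

Lemma mulopZ (c : K) f : mulop (c *: f) = (fun h => c *: mulop f h).
Proof. by apply: functional_extensionality => h; rewrite /mulop scalerAl. Qed.

Lemma mulopM f g : mulop (f * g) = mulop f \o mulop g.
Proof. by apply: functional_extensionality => h; rewrite /mulop /= mulrA. Qed.

Lemma mulop1 : mulop 1 = id :> (P -> P).
Proof. by apply: functional_extensionality => h; rewrite /mulop mul1r. Qed.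

Lemma Dalg_auto_restrict tau : Dalg_auto tau -> preserves_P tau ->
  exists s s', Palg_auto s s' /\ forall f, tau (mulop f) = mulop (s f).
Proof.
move=> [_ [tau_inj [_ [tauD [tauZ [tauM tau1]]]]]] [tauP tauP'].
have [s tau_mulop] : exists s, forall f, tau (mulop f) = mulop (s f).
  exact: functional_choice tauP.
have [s' tau_mulop'] : exists s', forall g, tau (mulop (s' g)) = mulop g.
  exact: functional_choice (fun g f => tau (mulop f) = mulop g) tauP'.
have Dmul f : inD (mulop f) := inD_mul f.
have s_inj : injective s.
  by move=> f g e; apply/mulop_inj/tau_inj; rewrite ?tau_mulop ?e.
have s'K : cancel s' s by move=> g; apply: mulop_inj; rewrite -tau_mulop.
exists s, s'; split=> //; do !split=> //.
- by move=> f; apply: s_inj; rewrite s'K.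
- by move=> f g; apply: mulop_inj; rewrite -tau_mulop mulopD tauD // !tau_mulop mulopD.
- by move=> c f; apply: mulop_inj; rewrite -tau_mulop mulopZ tauZ // tau_mulop mulopZ.
- by move=> f g; apply: mulop_inj; rewrite -tau_mulop mulopM tauM // !tau_mulop mulopM.
- by apply: mulop_inj; rewrite -tau_mulop mulop1 tau1.
Qed.

End Restriction.

Theorem corollary3p2 (K : fieldType) (p : nat) (hp : p \in [pchar K]) (n : nat) :
  (forall sigma sigma' : {mpoly K[n]} -> {mpoly K[n]},
     Palg_auto sigma sigma' ->
     Dalg_auto (conj_op sigma sigma') /\
     (forall f, conj_op sigma sigma' (mulop f) = mulop (sigma f)) /\
     preserves_P (conj_op sigma sigma')) /\
  (forall tau : ({mpoly K[n]} -> {mpoly K[n]}) -> ({mpoly K[n]} -> {mpoly K[n]}),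
     Dalg_auto tau -> preserves_P tau ->
     exists sigma sigma', Palg_auto sigma sigma' /\
       forall a, inD a -> tau a = conj_op sigma sigma' a) /\
  (forall (sigma sigma' : {mpoly K[n]} -> {mpoly K[n]})
          (tau : ({mpoly K[n]} -> {mpoly K[n]}) -> ({mpoly K[n]} -> {mpoly K[n]})),
     Palg_auto sigma sigma' -> Dalg_auto tau ->
     (forall f, tau (mulop f) = mulop (sigma f)) ->
     forall a, inD a -> tau a = conj_op sigma sigma' a).
Proof.
split.
  move=> s s' s_auto; split; first exact: conj_Dalg_auto.
  by split; [exact: conj_op_mulop | exact: conj_preserves_P].
split; last by move=> s s' tau; exact: Dalg_auto_extension_eq_conj hp.
move=> tau tau_auto tauP; have [s [s' [s_auto tau_mulop]]] := Dalg_auto_restrict tau_auto tauP.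
by exists s, s'; split=> //; apply: Dalg_auto_extension_eq_conj hp s_auto tau_auto tau_mulop.
Qed.
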